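(* For every $n\ge1$, the variety $\mathsf{PMV}_n=\mathbb{HSP}(\mathbf{P\L}_n)$ generated by $\mathbf{P\L}_n$ coincides with the quasi-variety $\mathbb{ISP}(\mathbf{P\L}_n)$ generated by $\mathbf{P\L}_n$. In other words, every member of $\mathsf{PMV}_n$ is isomorphic to a subalgebra of a (possibly empty) direct power of $\mathbf{P\L}_n$.
   Context: For $n\ge 1$, the algebra $\mathbf{P\L}_n=\langle\{0,\tfrac1n,\dots,\tfrac{n-1}{n},1\},\wedge,\vee,\odot,\oplus,0,1\rangle$ has $\wedge=\min$, $\vee=\max$, $x\odot y=\max\{0,x+y-1\}$ and $x\oplus y=\min\{1,x+y\}$. The variety it generates is denoted $\mathsf{PMV}_n$. *)

From mathcomp Require Import all_boot.
Set Implicit Arguments. Unset Strict Implicit. Unset Printing Implicit Defensive.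

Record alg := Alg {
  car :> Type;
  a_meet : car -> car -> car;
  a_join : car -> car -> car;
  a_odot : car -> car -> car;
  a_oplus : car -> car -> car;
  a_zero : car;
  a_one : car }.

Definition is_hom (A B : alg) (f : A -> B) : Prop :=
  (forall x y, f (a_meet x y) = a_meet (f x) (f y)) /\
  (forall x y, f (a_join x y) = a_join (f x) (f y)) /\
  (forall x y, f (a_odot x y) = a_odot (f x) (f y)) /\
  (forall x y, f (a_oplus x y) = a_oplus (f x) (f y)) /\
  f (a_zero A) = a_zero B /\
  f (a_one A) = a_one B.

Definition power_alg (I : Type) (A : alg) : alg :=
  @Alg (I -> A)
    (fun x y i => a_meet (x i) (y i))
    (fun x y i => a_join (x i) (y i))
    (fun x y i => a_odot (x i) (y i))
    (fun x y i => a_oplus (x i) (y i))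
    (fun _ => a_zero A)
    (fun _ => a_one A).

Record closed (A : alg) (S : A -> Prop) : Prop := Closed {
  cl_meet : forall x y, S x -> S y -> S (a_meet x y);
  cl_join : forall x y, S x -> S y -> S (a_join x y);
  cl_odot : forall x y, S x -> S y -> S (a_odot x y);
  cl_oplus : forall x y, S x -> S y -> S (a_oplus x y);
  cl_zero : S (a_zero A);
  cl_one : S (a_one A) }.

Definition sub_alg (A : alg) (S : A -> Prop) (HS : closed S) : alg :=
  @Alg {x : A | S x}
    (fun x y => exist S (a_meet (proj1_sig x) (proj1_sig y))
                  (cl_meet HS (proj2_sig x) (proj2_sig y)))
    (fun x y => exist S (a_join (proj1_sig x) (proj1_sig y))
                  (cl_join HS (proj2_sig x) (proj2_sig y)))
    (fun x y => exist S (a_odot (proj1_sig x) (proj1_sig y))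
                  (cl_odot HS (proj2_sig x) (proj2_sig y)))
    (fun x y => exist S (a_oplus (proj1_sig x) (proj1_sig y))
                  (cl_oplus HS (proj2_sig x) (proj2_sig y)))
    (exist S (a_zero A) (cl_zero HS))
    (exist S (a_one A) (cl_one HS)).

Definition in_HSP (K A : alg) : Prop :=
  exists (I : Type) (S : power_alg I K -> Prop) (HS : closed S)
         (f : sub_alg HS -> A),
    is_hom f /\ (forall a : A, exists b, f b = a).

Definition in_ISP (K A : alg) : Prop :=
  exists (I : Type) (f : A -> power_alg I K), is_hom f /\ injective f.

(* The element k/n of {0, 1/n, ..., 1} is encoded by its
   numerator k : 'I_n.+1, so that
     k/n /\ l/n = min(k,l)/n,   k/n \/ l/n = max(k,l)/n,
     k/n (.) l/n = max(0, k+l-n)/n,   k/n (+) l/n = min(n, k+l)/n,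
     0 = 0/n,  1 = n/n.  (Truncated subtraction on nat gives the max with 0.) *)
Definition PL (n : nat) : alg :=
  @Alg 'I_n.+1
    (fun k l => inord (minn k l))
    (fun k l => inord (maxn k l))
    (fun k l => inord (k + l - n))
    (fun k l => inord (minn n (k + l)))
    (inord 0)
    (inord n).

From Pilot Require Import Defs.
From mathcomp Require Import all_boot zify boolp.
From mathcomp Require classical_sets.
Set Implicit Arguments. Unset Strict Implicit. Unset Printing Implicit Defensive.

(* Composing the maps v |-> v (+) v and v |-> v (.) v suitably gives, for each k,
   a unary term threshold n k sending a in PL_n to 1 if a >= k/n and to 0 otherwise.
   Equations valid in PL_n pass to every A in HSP(PL_n): A is a distributive lattice,
   the thresholds are lattice endomorphisms that jointly separate the points of A, and
   they relate to (.) and (+) as in PL_n.  For a prime filter F of A the map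
   x |-> max {k | threshold n k x in F} / n is therefore a homomorphism A -> PL_n, and
   by the prime filter theorem these homomorphisms separate the points of A, which
   embeds A into a power of PL_n. *)

Inductive term : Type :=
  | Var of nat
  | Meet of term & term
  | Join of term & term
  | Odot of term & term
  | Oplus of term & term
  | Zero
  | One.

Definition term_alg : alg := Alg Meet Join Odot Oplus Zero One.

Fixpoint eval (A : alg) (e : nat -> A) (t : term) : A :=
  match t with
  | Var i => e i
  | Meet s u => a_meet (eval e s) (eval e u)
  | Join s u => a_join (eval e s) (eval e u)
  | Odot s u => a_odot (eval e s) (eval e u)
  | Oplus s u => a_oplus (eval e s) (eval e u)
  | Zero => a_zero A
  | One => a_one A
  end.

Definition holds (A : alg) (t1 t2 : term) : Prop :=
  forall e : nat -> A, eval e t1 = eval e t2.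

Lemma eval_hom (A : alg) (e : nat -> A) : is_hom (eval e : term_alg -> A).
Proof. by []. Qed.

Lemma hom_eval (A B : alg) (f : A -> B) (e : nat -> A) (t : term) :
  is_hom f -> f (eval e t) = eval (f \o e) t.
Proof.
case=> fM [fJ [fO [fP [f0 f1]]]].
by elim: t => //= s IHs u IHu; rewrite (fM, fJ, fO, fP) IHs IHu.
Qed.

Lemma eval_power (I : Type) (K : alg) (e : nat -> power_alg I K) (t : term) (i : I) :
  eval e t i = eval (fun j => e j i) t.
Proof. by elim: t => //= s IHs u IHu; rewrite IHs IHu. Qed.

Lemma eval_sub (A : alg) (S : A -> Prop) (HS : Defs.closed S) (e : nat -> sub_alg HS) (t : term) :
  proj1_sig (eval e t) = eval (fun j => proj1_sig (e j)) t.
Proof. by elim: t => //= s IHs u IHu; rewrite IHs IHu. Qed.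

Lemma holds_HSP (K A : alg) (t1 t2 : term) :
  in_HSP K A -> holds K t1 t2 -> holds A t1 t2.
Proof.
move=> [I [S [HS [f [hom_f onto_f]]]]] K_t12 e.
have [e' fe'] := boolp.choice (fun j => onto_f (e j)).
have -> : e = f \o e' by apply/funext => j; rewrite /= fe'.
rewrite -!hom_eval //; congr f.
move: (eval_sub e' t1) (eval_sub e' t2).
case: (eval e' t1) (eval e' t2) => [x1 Sx1] [x2 Sx2] /= E1 E2; apply: eq_exist.
by rewrite E1 E2; apply/funext => i; rewrite !eval_power.
Qed.

(* The numerator of a (+) a (if up) or a (.) a in PL_n, where a = v/n. *)
Definition double (n : nat) (up : bool) (v : nat) : nat :=
  if up then minn n (v + v) else v + v - n.

Definition doubles (n : nat) (L : seq bool) (v : nat) : nat :=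
  foldl (fun v up => double n up v) v L.

Lemma doubles_mono (n : nat) (L : seq bool) : {homo doubles n L : v w / v <= w}.
Proof. by elim: L => //= up L IH v w vw; apply: IH; rewrite /double; case: up; lia. Qed.

Lemma doubles_le (n : nat) (L : seq bool) (v : nat) : v <= n -> doubles n L v <= n.
Proof. by elim: L v => //= up L IH v vn; apply: IH; rewrite /double; case: up; lia. Qed.

Fixpoint spread (n fuel lo hi : nat) : seq bool :=
  if fuel is fuel'.+1 then
    if (lo == 0) && (hi == n) then [::]
    else let up := lo + hi <= n in up :: spread n fuel' (double n up lo) (double n up hi)
  else [::].

(* Each step lengthens [lo, hi] or moves one of its ends onto 0 or n. *)
Lemma spreadP (n fuel lo hi : nat) : lo < hi <= n ->
  3 * n - (hi - lo) + (lo != 0) + (hi != n) < fuel ->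
  doubles n (spread n fuel lo hi) lo = 0 /\ doubles n (spread n fuel lo hi) hi = n.
Proof.
elim: fuel lo hi => // fuel IH lo hi lohi fuelP /=.
case: ifP => [/andP[/eqP-> /eqP->] // | ends].
apply: IH; move: ends fuelP; rewrite /double.
all: by case: (leqP (lo + hi) n); repeat case: eqP; lia.
Qed.

Definition double_op (A : alg) (up : bool) (a : A) : A :=
  if up then a_oplus a a else a_odot a a.

(* The fuel bounds the measure of spreadP. *)
Definition spread_seq (n k : nat) : seq bool := spread n (3 * n).+2 k.-1 k.

Lemma spread_seqP (n k : nat) : 0 < k <= n ->
  doubles n (spread_seq n k) k.-1 = 0 /\ doubles n (spread_seq n k) k = n.
Proof. by move=> kP; apply: spreadP; do 2?case: eqP; lia. Qed.

Definition threshold (A : alg) (n k : nat) (a : A) : A :=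
  if k == 0 then a_one A
  else if k <= n then foldl (fun a up => double_op up a) a (spread_seq n k)
  else a_zero A.
Arguments threshold : simpl never.

Lemma hom_threshold (A B : alg) (f : A -> B) (n k : nat) (a : A) :
  is_hom f -> f (threshold n k a) = threshold n k (f a).
Proof.
case=> _ [_ [fO [fP [f0 f1]]]]; rewrite /threshold.
case: eqP => // _; case: leqP => // _.
by elim: (spread_seq n k) a => //= -[] L IH a; rewrite IH ?fO ?fP.
Qed.

Lemma eval_threshold (A : alg) (e : nat -> A) (n k : nat) (t : term_alg) :
  eval e (threshold n k t) = threshold n k (eval e t).
Proof. exact/hom_threshold/eval_hom. Qed.

Section PLValues.
Variable n : nat.
Implicit Types x y : PL n.

Lemma PL_meetE x y : val (a_meet x y) = minn x y.
Proof. by rewrite /= inordK //; have := ltn_ord x; lia. Qed.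
Lemma PL_joinE x y : val (a_join x y) = maxn x y.
Proof. by rewrite /= inordK //; have := ltn_ord x; have := ltn_ord y; lia. Qed.
Lemma PL_odotE x y : val (a_odot x y) = x + y - n.
Proof. by rewrite /= inordK //; have := ltn_ord x; have := ltn_ord y; lia. Qed.
Lemma PL_oplusE x y : val (a_oplus x y) = minn n (x + y).
Proof. by rewrite /= inordK //; lia. Qed.
Lemma PL_zeroE : val (a_zero (PL n)) = 0.
Proof. by rewrite /= inordK. Qed.
Lemma PL_oneE : val (a_one (PL n)) = n.
Proof. by rewrite /= inordK. Qed.

Lemma PL_thresholdE k x : val (threshold n k x) = if k <= x then n else 0.
Proof.
have x_le : x <= n by rewrite -ltnS.
rewrite /threshold.
case: eqP => [-> | /eqP k_gt0]; first exact: PL_oneE.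
case: (leqP k n) => [k_le | k_gt]; last by rewrite PL_zeroE; case: leqP; lia.
have -> : val (foldl (fun a up => double_op up a) x (spread_seq n k)) = doubles n (spread_seq n k) x.
  by elim: (spread_seq n k) x {x_le} => //= -[] L IH x; rewrite IH ?PL_oplusE ?PL_odotE.
have [lo_0 hi_n] : doubles n (spread_seq n k) k.-1 = 0 /\ doubles n (spread_seq n k) k = n.
  by apply: spread_seqP; lia.
case: leqP => [kx | xk]; apply/anti_leq.
  by rewrite doubles_le ?x_le -?[leqLHS]hi_n ?doubles_mono.
by rewrite leq0n andbT -[leqRHS]lo_0 doubles_mono; last lia.
Qed.
End PLValues.

Section PLIdentities.
Variable n : nat.
Local Notation x := (Var 0). Local Notation y := (Var 1). Local Notation z := (Var 2).
Local Notation thr k t := (threshold n k (t : term_alg)).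
Local Notation le_t s t := (holds (PL n) (Meet s t) s).

Lemma PL_evalE (e : nat -> PL n) :
  ((forall s t, val (eval e (Meet s t)) = minn (val (eval e s)) (val (eval e t)))
 * (forall s t, val (eval e (Join s t)) = maxn (val (eval e s)) (val (eval e t)))
 * (forall s t, val (eval e (Odot s t)) = val (eval e s) + val (eval e t) - n)
 * (forall s t, val (eval e (Oplus s t)) = minn n (val (eval e s) + val (eval e t)))
 * (val (eval e Zero) = 0) * (val (eval e One) = n)
 * (forall k t, val (eval e (thr k t)) = if k <= val (eval e t) then n else 0))%type.
Proof.
do !split=> *; rewrite ?eval_threshold ?PL_thresholdE //.
- exact: PL_meetE.
- exact: PL_joinE.
- exact: PL_odotE.
- exact: PL_oplusE.
- exact: PL_zeroE.
- exact: PL_oneE.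
Qed.

Ltac PL_identity := move=> e; apply: val_inj; rewrite !PL_evalE /=;
  have := ltn_ord (e 0); have := ltn_ord (e 1); have := ltn_ord (e 2);
  repeat case: ifP; lia.

Lemma PL_meetC : holds (PL n) (Meet x y) (Meet y x). Proof. PL_identity. Qed.
Lemma PL_joinC : holds (PL n) (Join x y) (Join y x). Proof. PL_identity. Qed.
Lemma PL_meetA : holds (PL n) (Meet x (Meet y z)) (Meet (Meet x y) z). Proof. PL_identity. Qed.
Lemma PL_meetxx : holds (PL n) (Meet x x) x. Proof. PL_identity. Qed.
Lemma PL_meetKU : holds (PL n) (Meet x (Join x y)) x. Proof. PL_identity. Qed.
Lemma PL_meetUl : holds (PL n) (Meet (Join x y) z) (Join (Meet x z) (Meet y z)).
Proof. PL_identity. Qed.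
Lemma PL_meet0x : holds (PL n) (Meet Zero x) Zero. Proof. PL_identity. Qed.
Lemma PL_meetx1 : holds (PL n) (Meet x One) x. Proof. PL_identity. Qed.
Lemma PL_thresholdI k : holds (PL n) (thr k (Meet x y)) (Meet (thr k x) (thr k y)).
Proof. PL_identity. Qed.
Lemma PL_thresholdU k : holds (PL n) (thr k (Join x y)) (Join (thr k x) (thr k y)).
Proof. PL_identity. Qed.
Lemma PL_threshold0 k : 0 < k -> holds (PL n) (thr k Zero) Zero.
Proof. move=> k_gt0; PL_identity. Qed.
Lemma PL_threshold1 k : k <= n -> holds (PL n) (thr k One) One.
Proof. move=> k_le; PL_identity. Qed.
Lemma PL_threshold_anti j k : j <= k -> le_t (thr k x) (thr j x).
Proof. move=> jk; PL_identity. Qed.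
Lemma PL_threshold_oplus i j : le_t (Meet (thr i x) (thr j y)) (thr (minn n (i + j)) (Oplus x y)).
Proof. PL_identity. Qed.
Lemma PL_threshold_oplus_split i j :
  le_t (thr (i + j).+1 (Oplus x y)) (Join (thr i.+1 x) (thr j.+1 y)).
Proof. PL_identity. Qed.
Lemma PL_threshold_odot i j : le_t (Meet (thr i x) (thr j y)) (thr (i + j - n) (Odot x y)).
Proof. PL_identity. Qed.
Lemma PL_threshold_odot_split k i j : 0 < k -> i + j < k + n ->
  le_t (thr k (Odot x y)) (Join (thr i.+1 x) (thr j.+1 y)).
Proof. move=> k_gt0 ijk; PL_identity. Qed.

(* In PL_n, chain_term j is x if min(x, y) >= j/n, and min(x, y) otherwise. *)
Definition chain_term j := Join (Meet x y) (Meet x (thr j (Meet x y))).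
Lemma PL_chain0 : holds (PL n) (chain_term 0) x. Proof. PL_identity. Qed.
Lemma PL_chain_end : holds (PL n) (chain_term n) (Meet x y). Proof. PL_identity. Qed.
Lemma PL_chainS_meet j :
  holds (PL n) (Join (chain_term j.+1) (Meet (chain_term j) (thr j.+1 (Meet x y)))) (chain_term j.+1).
Proof. PL_identity. Qed.
Lemma PL_chainS j :
  holds (PL n) (Join (chain_term j.+1) (Meet (chain_term j) (thr j.+1 x))) (chain_term j).
Proof. PL_identity. Qed.
End PLIdentities.

Record distr_laws (T : Type) (meet join : T -> T -> T) : Prop := DistrLaws {
  meetC : commutative meet;
  joinC : commutative join;
  meetA : associative meet;
  meetxx : idempotent_op meet;
  meetKU : forall x y, meet x (join x y) = x;
  meetUl : left_distributive meet join }.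

Section PrimeFilters.
Variables (T : Type) (meet join : T -> T -> T).
Hypothesis L : distr_laws meet join.
Local Infix "⊓" := meet (at level 40, left associativity).
Local Infix "⊔" := join (at level 50, left associativity).

Definition le_meet (x y : T) : Prop := x ⊓ y = x.
Local Infix "≤" := le_meet (at level 70).

Definition is_filter (F : T -> Prop) : Prop :=
  (forall x y, F x -> F y -> F (x ⊓ y)) /\ (forall x y, F x -> x ≤ y -> F y).

Definition is_prime (F : T -> Prop) : Prop := forall x y, F (x ⊔ y) -> F x \/ F y.

Lemma le_refl x : x ≤ x.
Proof. exact: (meetxx L). Qed.

Lemma le_trans x y z : x ≤ y -> y ≤ z -> x ≤ z.
Proof. by rewrite /le_meet => xy yz; rewrite -xy -(meetA L) yz. Qed.

Lemma le_meetl x y : x ⊓ y ≤ x.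
Proof. by rewrite /le_meet (meetC L) (meetA L) (meetxx L). Qed.

Lemma le_meetr x y : x ⊓ y ≤ y.
Proof. by rewrite /le_meet -(meetA L) (meetxx L). Qed.

Lemma le_meetP x y z : x ≤ y -> x ≤ z -> x ≤ y ⊓ z.
Proof. by rewrite /le_meet => xy xz; rewrite (meetA L) xy xz. Qed.

Lemma le_meet2 x y x' y' : x ≤ y -> x' ≤ y' -> x ⊓ x' ≤ y ⊓ y'.
Proof.
move=> xy x'y'; apply: le_meetP.
  by apply: le_trans (le_meetl _ _) xy.
by apply: le_trans (le_meetr _ _) x'y'.
Qed.

Lemma le_joinl x y : x ≤ x ⊔ y.
Proof. exact: (meetKU L). Qed.

Lemma le_joinr x y : y ≤ x ⊔ y.
Proof. by rewrite (joinC L); apply: le_joinl. Qed.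

Lemma le_joinP x y z : x ≤ z -> y ≤ z -> x ⊔ y ≤ z.
Proof. by rewrite /le_meet => xz yz; rewrite (meetUl L) xz yz. Qed.

Lemma le_anti x y : x ≤ y -> y ≤ x -> x = y.
Proof. by rewrite /le_meet => xy yx; rewrite -[LHS]xy -[RHS]yx (meetC L). Qed.

Lemma filter_meetE F x y : is_filter F -> F (x ⊓ y) <-> F x /\ F y.
Proof.
move=> [F_meet F_up]; split; last by move=> [Fx Fy]; apply: F_meet.
by move=> Fxy; split; apply: F_up Fxy _; [apply: le_meetl | apply: le_meetr].
Qed.

Lemma maximal_filter_avoiding a b : ~ a ≤ b ->
  exists M, [/\ is_filter M, M a, ~ M b &
    forall G, is_filter G -> ~ G b -> (forall x, M x -> G x) -> forall x, G x -> M x].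
Proof.
move=> nab.
(* The last condition makes P hold for the empty set, the union of the empty chain. *)
pose P (X : T -> Prop) := [/\ is_filter X, ~ X b & (exists z, X z) -> X a].
have [M [[[M_meet M_up] Mb Ma] M_max]] : exists M, P M /\
    forall G, classical_sets.proper M G -> ~ P G.
  apply: classical_sets.Zorn_bigcup => Fs Fs_P Fs_chain; split; first split.
  - move=> x y [X FsX Xx] [Y FsY Yy].
    have [XY | YX] := Fs_chain X Y FsX FsY.
    + have [[Y_meet _] _ _] := Fs_P Y FsY; exists Y => //; exact: Y_meet (XY _ Xx) Yy.
    + have [[X_meet _] _ _] := Fs_P X FsX; exists X => //; exact: X_meet Xx (YX _ Yy).
  - move=> x y [X FsX Xx] xy; have [[_ X_up] _ _] := Fs_P X FsX.
    by exists X => //; exact: X_up xy.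
  - by move=> [X FsX Xb]; have [_ nXb _] := Fs_P X FsX.
  - move=> [z [X FsX Xz]]; have [_ _ Xa] := Fs_P X FsX.
    by exists X => //; apply: Xa; exists z.
have P_up_a : P (le_meet a).
  split; first split.
  - exact: le_meetP.
  - by move=> x y ax xy; apply: le_trans ax xy.
  - exact: nab.
  - by move=> _; apply: le_refl.
have {}Ma : M a.
  apply: contrapT => nMa; apply: (M_max (le_meet a)) P_up_a; split.
    by move=> z Mz; exfalso; apply: nMa; apply: Ma; exists z.
  by move=> up_a_M; apply: nMa; apply: up_a_M; apply: le_refl.
exists M; split=> // G G_filter nGb MG x Gx; apply: contrapT => nMx.
apply: (M_max G); last by split=> // _; apply: MG.
by split=> // GM; apply: nMx; apply: GM.
Qed.

Lemma prime_filter_separation a b : ~ a ≤ b ->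
  exists F, [/\ is_filter F, is_prime F, F a & ~ F b].
Proof.
move=> /maximal_filter_avoiding [M [[M_meet M_up] Ma nMb M_max]].
exists M; split=> // x y Mxy; apply: contrapT => /not_orP [nMx nMy].
(* The filter generated by M and z contains b when z is not in M. *)
have below_b z : ~ M z -> exists2 m, M m & m ⊓ z ≤ b.
  move=> nMz; apply: contrapT => nb; apply: nMz.
  pose G t := exists2 m, M m & m ⊓ z ≤ t.
  apply: (M_max G); last by exists a => //; apply: le_meetr.
  - split=> [t1 t2 [m1 M1 h1] [m2 M2 h2] | t1 t2 [m M1 h1] h2].
      exists (m1 ⊓ m2); first exact: M_meet.
      apply: le_trans (le_meet2 h1 h2); apply: le_meetP.
        exact: le_meet2 (le_meetl _ _) (le_refl z).
      exact: le_meet2 (le_meetr _ _) (le_refl z).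
    by exists m => //; apply: le_trans h1 h2.
  - by move=> [m Mm mzb]; apply: nb; exists m.
  - by move=> m Mm; exists m => //; apply: le_meetl.
have [m1 M1 h1] := below_b x nMx.
have [m2 M2 h2] := below_b y nMy.
apply: nMb; apply: (M_up ((x ⊔ y) ⊓ (m1 ⊓ m2))).
  exact: M_meet Mxy (M_meet _ _ M1 M2).
rewrite (meetUl L) [x ⊓ _](meetC L) [y ⊓ _](meetC L); apply: le_joinP.
  exact: le_trans (le_meet2 (le_meetl _ _) (le_refl x)) h1.
exact: le_trans (le_meet2 (le_meetr _ _) (le_refl y)) h2.
Qed.

End PrimeFilters.

Lemma eq_leq_iff (m p : nat) : (forall k, k <= m <-> k <= p) -> m = p.
Proof. by move=> mp; apply/anti_leq/andP; split; [apply/(mp m) | apply/(mp p)]. Qed.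

Section HSPMember.
Variables (n : nat) (A : alg).
Hypothesis A_HSP : in_HSP (PL n) A.

Local Infix "⊓" := (@a_meet A) (at level 40, left associativity).
Local Infix "⊔" := (@a_join A) (at level 50, left associativity).
Local Infix "≤" := (le_meet (@a_meet A)) (at level 70).
Local Notation thr k a := (threshold n k (a : A)).

Definition env3 (x y z : A) (i : nat) : A := match i with 0 => x | 1 => y | _ => z end.

Lemma transfer_law t1 t2 x y z :
  holds (PL n) t1 t2 -> eval (env3 x y z) t1 = eval (env3 x y z) t2.
Proof. by move=> PL_t12; apply: (holds_HSP A_HSP PL_t12). Qed.

Ltac by_PL_law H x y z := by have := transfer_law x y z H; rewrite /= ?eval_threshold.

Lemma A_distr_laws : distr_laws (@a_meet A) (@a_join A).
Proof.
split=> [x y | x y | x y z | x | x y | x y z].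
- by_PL_law (@PL_meetC n) x y x.
- by_PL_law (@PL_joinC n) x y x.
- by_PL_law (@PL_meetA n) x y z.
- by_PL_law (@PL_meetxx n) x x x.
- by_PL_law (@PL_meetKU n) x y x.
- by_PL_law (@PL_meetUl n) x y z.
Qed.

Lemma A_meet0x x : a_zero A ⊓ x = a_zero A.
Proof. by_PL_law (@PL_meet0x n) x x x. Qed.
Lemma A_meetx1 x : x ⊓ a_one A = x.
Proof. by_PL_law (@PL_meetx1 n) x x x. Qed.
Lemma thresholdI k x y : thr k (x ⊓ y) = thr k x ⊓ thr k y.
Proof. by_PL_law (@PL_thresholdI n k) x y x. Qed.
Lemma thresholdU k x y : thr k (x ⊔ y) = thr k x ⊔ thr k y.
Proof. by_PL_law (@PL_thresholdU n k) x y x. Qed.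
Lemma threshold0 k : 0 < k -> thr k (a_zero A) = a_zero A.
Proof. move=> k_gt0; by_PL_law (@PL_threshold0 n k k_gt0) (a_zero A) (a_zero A) (a_zero A). Qed.
Lemma threshold1 k : k <= n -> thr k (a_one A) = a_one A.
Proof. move=> k_le; by_PL_law (@PL_threshold1 n k k_le) (a_one A) (a_one A) (a_one A). Qed.
Lemma threshold_anti j k x : j <= k -> thr k x ≤ thr j x.
Proof. move=> jk; by_PL_law (@PL_threshold_anti n j k jk) x x x. Qed.
Lemma threshold_oplus i j x y : thr i x ⊓ thr j y ≤ thr (minn n (i + j)) (a_oplus x y).
Proof. by_PL_law (@PL_threshold_oplus n i j) x y x. Qed.
Lemma threshold_oplus_split i j x y :
  thr (i + j).+1 (a_oplus x y) ≤ thr i.+1 x ⊔ thr j.+1 y.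
Proof. by_PL_law (@PL_threshold_oplus_split n i j) x y x. Qed.
Lemma threshold_odot i j x y : thr i x ⊓ thr j y ≤ thr (i + j - n) (a_odot x y).
Proof. by_PL_law (@PL_threshold_odot n i j) x y x. Qed.
Lemma threshold_odot_split k i j x y : 0 < k -> i + j < k + n ->
  thr k (a_odot x y) ≤ thr i.+1 x ⊔ thr j.+1 y.
Proof. move=> k_gt0 ijk; by_PL_law (@PL_threshold_odot_split n k i j k_gt0 ijk) x y x. Qed.

Definition chain x y j := (x ⊓ y) ⊔ (x ⊓ thr j (x ⊓ y)).

Lemma chain0 x y : chain x y 0 = x.
Proof. by_PL_law (@PL_chain0 n) x y x. Qed.
Lemma chain_end x y : chain x y n = x ⊓ y.
Proof. by_PL_law (@PL_chain_end n) x y x. Qed.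
Lemma chainS_meet x y j : chain x y j.+1 ⊔ (chain x y j ⊓ thr j.+1 (x ⊓ y)) = chain x y j.+1.
Proof. by_PL_law (@PL_chainS_meet n j) x y x. Qed.
Lemma chainS x y j : chain x y j.+1 ⊔ (chain x y j ⊓ thr j.+1 x) = chain x y j.
Proof. by_PL_law (@PL_chainS n j) x y x. Qed.

Lemma thresholds_inj x y : (forall k, thr k x = thr k y) -> x = y.
Proof.
have le_of_thr u v : (forall k, thr k u = thr k v) -> u = u ⊓ v.
  move=> uv; have thr_uv k : thr k (u ⊓ v) = thr k u.
    by rewrite thresholdI -uv (meetxx A_distr_laws).
  have chain_u j : chain u v j = u.
    elim: j => [|j IH]; first exact: chain0.
    by rewrite -[RHS]IH -[RHS]chainS -thr_uv chainS_meet.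
  by rewrite -(chain_end u v) chain_u.
move=> xy; rewrite [LHS](le_of_thr x y xy) [RHS](le_of_thr y x) => [|k]; last by rewrite xy.
exact: (meetC A_distr_laws).
Qed.

Section PrimeFilterLevel.
Variable F : A -> Prop.
Hypotheses (F_filter : is_filter (@a_meet A) F) (F_prime : is_prime (@a_join A) F).
Hypotheses (F1 : F (a_one A)) (F0 : ~ F (a_zero A)).

Let F_up : forall x y, F x -> x ≤ y -> F y := F_filter.2.

Definition level (x : A) : nat := \max_(k < n.+1 | `[< F (thr k x) >]) k.

Lemma level_le x : level x <= n.
Proof. by apply/bigmax_leqP => k _; rewrite -ltnS. Qed.

Lemma levelP x k : k <= level x <-> F (thr k x).
Proof.
case: (posnP k) => [-> | k_gt0]; first by split.
case: (leqP k n) => [k_le | k_gt]; last first.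
  have -> : thr k x = a_zero A by rewrite /threshold gtn_eqF // leqNgt k_gt.
  by split=> // k_le; have := level_le x; lia.
split=> [k_le_level | Fk]; last first.
  have k_ord : k < n.+1 by rewrite ltnS.
  by rewrite -[k](inordK k_ord); apply: leq_bigmax_cond; rewrite inordK // asboolE.
apply: contrapT => nFk; suff : level x < k by lia.
rewrite -[k]prednK // ltnS; apply/bigmax_leqP => j /asboolP Fj.
rewrite leqNgt; apply/negP => kj; apply: nFk; apply: F_up Fj _.
by apply: threshold_anti; lia.
Qed.

Let L := A_distr_laws.
Let F_meetE x y : F (x ⊓ y) <-> F x /\ F y := filter_meetE L x y F_filter.

Lemma level_meet x y : level (x ⊓ y) = minn (level x) (level y).
Proof.
apply: eq_leq_iff => k; rewrite leq_min; split.
  by move/levelP; rewrite thresholdI => /F_meetE [/levelP-> /levelP->].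
by move=> /andP[/levelP Fx /levelP Fy]; apply/levelP; rewrite thresholdI; apply/F_meetE.
Qed.

Lemma level_join x y : level (x ⊔ y) = maxn (level x) (level y).
Proof.
apply: eq_leq_iff => k; rewrite leq_max; split.
  by move/levelP; rewrite thresholdU => /F_prime [/levelP-> | /levelP->]; rewrite ?orbT.
move=> /orP[/levelP Fx | /levelP Fy]; apply/levelP; rewrite thresholdU.
  exact: F_up Fx (le_joinl L _ _).
exact: F_up Fy (le_joinr L _ _).
Qed.

Lemma level_odot x y : level (a_odot x y) = level x + level y - n.
Proof.
apply: eq_leq_iff => k; split=> [/levelP Fk | k_le].
  case: (posnP k) => [-> // | k_gt0]; rewrite leqNgt; apply/negP => lt.
  have lt_kn : level x + level y < k + n by lia.
  by case: (F_prime (F_up Fk (threshold_odot_split x y k_gt0 lt_kn))) => /levelP; lia.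
have F_xy : F (thr (level x) x ⊓ thr (level y) y) by apply/F_meetE; split; apply/levelP.
apply/levelP; apply: F_up (F_up F_xy (threshold_odot _ _ _ _)) _.
by apply: threshold_anti.
Qed.

Lemma level_oplus x y : level (a_oplus x y) = minn n (level x + level y).
Proof.
apply: eq_leq_iff => k; split=> [k_le | k_le].
  rewrite leq_min (leq_trans k_le (level_le _)) /= leqNgt; apply/negP => lt.
  have Fk : F (thr (level x + level y).+1 (a_oplus x y)).
    by apply: F_up ((levelP _ _).1 k_le) _; apply: threshold_anti.
  by case: (F_prime (F_up Fk (threshold_oplus_split _ _ x y))) => /levelP; lia.
set i := minn k (level x).
have F_ij : F (thr i x ⊓ thr (k - i) y) by apply/F_meetE; split; apply/levelP; lia.
apply/levelP; have := F_up F_ij (threshold_oplus _ _ _ _).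
by have -> : minn n (i + (k - i)) = k by lia.
Qed.

Lemma level_zero : level (a_zero A) = 0.
Proof.
apply: eq_leq_iff => k; rewrite leqn0; split=> [/levelP | /eqP-> //].
by case: (posnP k) => [-> // | k_gt0]; rewrite threshold0.
Qed.

Lemma level_one : level (a_one A) = n.
Proof.
apply: eq_leq_iff => k; split=> [k_le | k_le]; first exact: leq_trans k_le (level_le _).
by apply/levelP; rewrite threshold1.
Qed.

Definition level_hom (x : A) : PL n := inord (level x).

Lemma level_homE x : val (level_hom x) = level x.
Proof. by rewrite /level_hom /= inordK // ltnS level_le. Qed.

Lemma level_hom_is_hom : is_hom level_hom.
Proof.
split; [|split; [|split; [|split; [|split]]]]; try move=> x y; apply: val_inj.
- by rewrite PL_meetE !level_homE level_meet.
- by rewrite PL_joinE !level_homE level_join.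
- by rewrite PL_odotE !level_homE level_odot.
- by rewrite PL_oplusE !level_homE level_oplus.
- by rewrite PL_zeroE level_homE level_zero.
- by rewrite PL_oneE level_homE level_one.
Qed.

End PrimeFilterLevel.

Lemma homs_to_PL_separate x y : x <> y -> exists h : A -> PL n, is_hom h /\ h x <> h y.
Proof.
move=> xy.
have [k thr_xy] : exists k, thr k x <> thr k y.
  by apply/existsNP => thr_eq; apply: xy; apply: thresholds_inj.
have sep u v : ~ thr k u ≤ thr k v -> exists h : A -> PL n, is_hom h /\ h u <> h v.
  move=> /(prime_filter_separation A_distr_laws) [F [F_filter F_prime Fu nFv]].
  have F1 : F (a_one A) by apply: F_filter.2 Fu (A_meetx1 _).
  have F0 : ~ F (a_zero A) by move=> F0; apply: nFv; apply: F_filter.2 F0 (A_meet0x _).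
  exists (level_hom F); split; first exact: level_hom_is_hom F_filter F_prime F1 F0.
  move=> /(congr1 val); rewrite !level_homE => uv.
  by apply: nFv; apply/(levelP F_filter F1 F0); rewrite -uv; apply/levelP.
have [xy_le | nxy] := pselect (thr k x ≤ thr k y); last exact: sep x y nxy.
have nyx : ~ thr k y ≤ thr k x.
  by move=> yx_le; apply: thr_xy; apply: (le_anti A_distr_laws).
by have [h [h_hom hyx]] := sep y x nyx; exists h; split=> // /esym.
Qed.
End HSPMember.

Lemma ISP_HSP (K A : alg) : in_ISP K A -> in_HSP K A.
Proof.
move=> [I [g [[gM [gJ [gO [gP [g0 g1]]]]] g_inj]]].
pose S (v : power_alg I K) := exists a, g a = v.
have S_closed : Defs.closed S.
  split=> [_ _ [a <-] [b <-] | _ _ [a <-] [b <-] | _ _ [a <-] [b <-] | _ _ [a <-] [b <-] | |].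
  - by exists (a_meet a b).
  - by exists (a_join a b).
  - by exists (a_odot a b).
  - by exists (a_oplus a b).
  - by exists (a_zero A).
  - by exists (a_one A).
pose f (s : sub_alg S_closed) : A := proj1_sig (cid (proj2_sig s)).
have gf s : g (f s) = proj1_sig s by rewrite /f; case: cid.
exists I, S, S_closed, f; split.
  split; [|split; [|split; [|split; [|split]]]]; try move=> x y; apply: g_inj;
  by rewrite ?gM ?gJ ?gO ?gP ?g0 ?g1 !gf.
by move=> a; exists (exist S (g a) (ex_intro _ a erefl)); apply: g_inj; rewrite gf.
Qed.

Lemma separating_homs_ISP (K A : alg) :
  (forall x y : A, x <> y -> exists h : A -> K, is_hom h /\ h x <> h y) -> in_ISP K A.
Proof.
move=> sep; pose J := {h : A -> K | is_hom h}.
exists J, (fun a (h : J) => proj1_sig h a); split.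
  split; [|split; [|split; [|split; [|split]]]]; try move=> x y;
  by apply/funext => -[h [hM [hJ [hO [hP [h0 h1]]]]]] /=.
move=> x y xy; apply: contrapT => /sep [h [h_hom hxy]].
by apply: hxy; have := congr1 (fun v => v (exist _ h h_hom)) xy.
Qed.

Theorem corollary3p6 (n : nat) (hn : 1 <= n) (A : alg) :
  in_HSP (PL n) A <-> in_ISP (PL n) A.
Proof.
split; last exact: ISP_HSP.
by move=> A_HSP; apply: separating_homs_ISP; apply: homs_to_PL_separate.
Qed.
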